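(* Let $p_c,q_c\in\mathbb{R}_{\ge0}$, $M=\begin{bmatrix} p_c & q_c\\ -q_c & p_c\end{bmatrix}$, $v_{\min}>0$, and consider the constant power load (CPL) whose current response to a voltage $v$ is $i=\dfrac{1}{\|v\|_2^2}Mv$, with $\|v\|_2\ge v_{\min}$. Write $v=v_0+v_\delta$, where $v_0$ is an admissible operating voltage with $V_0=\|v_0\|_2\ge v_{\min}$ (in particular $V_0>0$), and define the ripple ratio $\rho=\|v_\delta\|_\infty/V_0$, assumed to satisfy $2\rho+\rho^2<1$. Define the frequency-preserving (linear) part of the current $i_{\mathrm{lin}}=\frac{1}{V_0^2}M(v_0+v_\delta)$ and the nonlinear remainder $i_{\mathrm{har}}=i-i_{\mathrm{lin}}$. Then $$\|i_{\mathrm{har}}\|_2\le \frac{\sigma_{\max}(M)}{v_{\min}^2}\,\frac{(\rho+1)(\rho+2)}{1-(2\rho+\rho^2)}\,\|v_\delta\|_2,$$ and hence the CPL is $\varepsilon(\rho)$-frequency-preserving with $\varepsilon(\rho)=\dfrac{\sigma_{\max}(M)}{v_{\min}^2}\,\dfrac{(\rho+1)(\rho+2)}{1-(2\rho+\rho^2)}$.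
   Context: $\sigma_{\max}(M)$ is the largest singular value of $M$; $\|\cdot\|_2$ denotes the 2-norm (called $\mathcal{L}_2$-norm in the paper) and $\|\cdot\|_\infty$ the sup norm. ''The CPL is $\varepsilon$-frequency-preserving'' means that its current decomposes as the linear, frequency-preserving part $i_{\mathrm{lin}}$ plus a nonlinear remainder $i_{\mathrm{har}}$ satisfying $\|i_{\mathrm{har}}\|_2\le\varepsilon\|v_\delta\|_2$. *)

From HB Require Import structures.
From mathcomp Require Import all_boot all_order all_algebra.
From mathcomp Require Import all_classical all_reals all_analysis.
Set Implicit Arguments. Unset Strict Implicit. Unset Printing Implicit Defensive.
Import Order.TTheory GRing.Theory Num.Theory.
Local Open Scope ring_scope.
Local Open Scope classical_set_scope.

Definition vnorm {R : realType} (x : 'cV[R]_2) : R :=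
  Num.sqrt (\sum_(i < 2) x i ord0 ^+ 2).

(* The CPL matrix M = [[pc, qc], [-qc, pc]]. *)
Definition cplM {R : realType} (pc qc : R) : 'M[R]_2 :=
  \matrix_(i < 2, j < 2)
    (if i == j then pc else if i == ord0 then qc else - qc).

Definition sigma_max {R : realType} (M : 'M[R]_2) : R :=
  Num.sqrt (sup [set a : R | eigenvalue (M^T *m M) a]).

Definition L2norm {R : realType} (f : R -> 'cV[R]_2) : \bar R :=
  Lnorm (@lebesgue_measure R) 2%:E (fun t => (vnorm (f t))%:E).

Definition supnorm {R : realType} (f : R -> 'cV[R]_2) : \bar R :=
  ereal_sup [set (vnorm (f t))%:E | t in [set: R]].

Definition cpl_current {R : realType} (pc qc : R) (v : R -> 'cV[R]_2) :
  R -> 'cV[R]_2 :=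
  fun t => (vnorm (v t) ^+ 2)^-1 *: (cplM pc qc *m v t).

Definition cpl_lin {R : realType} (pc qc : R) (v0 : 'cV[R]_2)
  (vd : R -> 'cV[R]_2) : R -> 'cV[R]_2 :=
  fun t => (vnorm v0 ^+ 2)^-1 *: (cplM pc qc *m (v0 + vd t)).

Definition cpl_har {R : realType} (pc qc : R) (v0 : 'cV[R]_2)
  (vd : R -> 'cV[R]_2) : R -> 'cV[R]_2 :=
  fun t => cpl_current pc qc (fun s => v0 + vd s) t - cpl_lin pc qc v0 vd t.

Definition eps_rho {R : realType} (pc qc vmin rho : R) : R :=
  sigma_max (cplM pc qc) / vmin ^+ 2 *
  ((rho + 1) * (rho + 2) / (1 - (2 * rho + rho ^+ 2))).

From HB Require Import structures.
From mathcomp Require Import all_boot all_order all_algebra.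
From mathcomp Require Import all_classical all_reals all_analysis measurable_realfun.
From mathcomp Require Import ring lra.

Set Implicit Arguments.
Unset Strict Implicit.
Unset Printing Implicit Defensive.

Import Order.TTheory GRing.Theory Num.Theory.
Local Open Scope ring_scope.
Local Open Scope classical_set_scope.

(* Since [M^T M = (pc^2 + qc^2) I], [M] scales every vector by [sigma_max M],
   so [i_har = (|v|^-2 - V0^-2) M v] has norm
   [sigma_max M * ||v|^2 - V0^2| / (|v| V0^2)].  By Cauchy-Schwarz,
   [||v0 + vd|^2 - V0^2| <= |vd| (2 V0 + |vd|) <= (2 + rho) V0 |vd|], hence
   [|i_har(t)| <= sigma_max M (2 + rho) / vmin^2 * |vd(t)|] pointwise, and
   [2 + rho] is at most the ripple factor of [eps_rho].  Integrating this
   domination gives the L2 bound. *)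

Section Lnorm_domination.
Context d (T : measurableType d) (R : realType).
Variable mu : {measure set T -> \bar R}.
Local Open Scope ereal_scope.

(* Unlike [ge0_le_integral], no measurability is required: over [setT] the
   integral of a nonnegative function is a supremum over simple minorants. *)
Lemma ge0_le_integralT (f g : T -> \bar R) :
  (forall x, 0 <= f x) -> (forall x, f x <= g x) ->
  \int[mu]_x f x <= \int[mu]_x g x.
Proof.
move=> f0 fg; have g0 x : 0 <= g x := le_trans (f0 x) (fg x).
rewrite !ge0_integralTE//; apply: ereal_sup_le => _ [h hf <-].
by exists h => //= x; exact: le_trans (hf x) (fg x).
Qed.

Lemma Lnorm_le_scale (p K : R) (f g : T -> R) : (0 < p)%R -> (0 <= K)%R ->
  measurable_fun [set: T] g -> (forall x, `|f x| <= K * `|g x|)%R ->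
  'N[mu]_p%:E[EFin \o f] <= K%:E * 'N[mu]_p%:E[EFin \o g].
Proof.
move=> p0 K0 mg fKg; rewrite unlock /=.
have int_ge0 (h : T -> R) : 0 <= \int[mu]_x (`|h x| `^ p)%:E.
  by apply: integral_ge0 => x _; rewrite lee_fin powR_ge0.
have mgp : measurable_fun [set: T] (fun x => (`|g x| `^ p)%:E).
  exact/measurable_EFinP/(measurableT_comp (measurable_powR p))/measurableT_comp.
have int_le : \int[mu]_x (`|f x| `^ p)%:E <=
    (K `^ p)%:E * \int[mu]_x (`|g x| `^ p)%:E.
  rewrite -ge0_integralZl_EFin ?powR_ge0//.
  apply: ge0_le_integralT => x; first by rewrite lee_fin powR_ge0.
  rewrite -EFinM lee_fin -powRM//.
  by apply: ge0_ler_powR; rewrite ?nnegrE ?mulr_ge0// ltW.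
apply: (le_trans (gt0_ler_poweR _ _ _ int_le)).
- by rewrite invr_ge0 ltW.
- by rewrite in_itv/= leey andbT.
- by rewrite in_itv/= leey andbT mule_ge0 ?lee_fin ?powR_ge0.
rewrite poweRM ?lee_fin ?powR_ge0//.
by rewrite poweR_EFin -powRrM mulfV ?gt_eqF// powRr1.
Qed.

End Lnorm_domination.

Section plane_vectors.
Variable R : realType.
Implicit Types (x y z : 'cV[R]_2) (p q : R).

Local Notation x0 z := (z ord0 ord0).
Local Notation x1 z := (z ord_max ord0).

Lemma sum_ord2 (F : 'I_2 -> R) : \sum_(i < 2) F i = F ord0 + F ord_max.
Proof. by rewrite big_ord_recr big_ord1; congr (F _ + _); apply: val_inj. Qed.

Lemma vnorm_ge0 z : 0 <= vnorm z.
Proof. exact: sqrtr_ge0. Qed.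

Lemma vnorm_sqr z : vnorm z ^+ 2 = x0 z ^+ 2 + x1 z ^+ 2.
Proof. by rewrite /vnorm sum_ord2 sqr_sqrtr// addr_ge0 ?sqr_ge0. Qed.

Lemma vnormZ (k : R) z : vnorm (k *: z) = `|k| * vnorm z.
Proof.
rewrite /vnorm !sum_ord2 !mxE -sqrtr_sqr -sqrtrM ?sqr_ge0//.
by congr Num.sqrt; ring.
Qed.

Lemma vdot_le_vnorm x y : `|x0 x * x0 y + x1 x * x1 y| <= vnorm x * vnorm y.
Proof.
rewrite -ler_sqr ?nnegrE ?mulr_ge0 ?vnorm_ge0//.
rewrite real_normK ?num_real// exprMn !vnorm_sqr.
have := sqr_ge0 (x0 x * x1 y - x1 x * x0 y); lra.
Qed.

Lemma vnormD_sqr_dist x y :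
  `|vnorm (x + y) ^+ 2 - vnorm x ^+ 2| <= vnorm y * (2 * vnorm x + vnorm y).
Proof.
have -> : vnorm (x + y) ^+ 2 - vnorm x ^+ 2 =
    2 * (x0 x * x0 y + x1 x * x1 y) + vnorm y ^+ 2.
  by rewrite !vnorm_sqr !mxE; ring.
apply: (le_trans (ler_normD _ _)).
rewrite normrM [`|2|]ger0_norm// [`|_ ^+ 2|]ger0_norm ?exprn_ge0 ?vnorm_ge0//.
have := vdot_le_vnorm x y; nra.
Qed.

Lemma vnorm_cplM p q z :
  vnorm (cplM p q *m z) = Num.sqrt (p ^+ 2 + q ^+ 2) * vnorm z.
Proof.
rewrite /vnorm !sum_ord2 !mxE !sum_ord2 !mxE /= -sqrtrM ?addr_ge0 ?sqr_ge0//.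
by congr Num.sqrt; ring.
Qed.

Lemma cplM_tr_mul p q : (cplM p q)^T *m cplM p q = (p ^+ 2 + q ^+ 2)%:M.
Proof.
apply/matrixP => i j; rewrite !mxE sum_ord2 !mxE.
by case: i => [[|[|//]] ?]; case: j => [[|[|//]] ?];
  rewrite /= ?mulr1n ?mulr0n; ring.
Qed.

Lemma eigenvalue_scalar_mx (c a : R) : eigenvalue (c%:M : 'M[R]_2) a = (a == c).
Proof.
apply/eigenvalueP/eqP => [[v] | ->].
  rewrite mul_mx_scalar => /eqP; rewrite -subr_eq0 -scalerBl scaler_eq0 subr_eq0.
  by case/orP => [/eqP -> //| /[swap] /negbTE ->].
exists (const_mx 1); first by rewrite mul_mx_scalar.
by apply/eqP => /matrixP /(_ ord0 ord0); rewrite !mxE => /eqP; rewrite oner_eq0.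
Qed.

Lemma sigma_max_cplM p q : sigma_max (cplM p q) = Num.sqrt (p ^+ 2 + q ^+ 2).
Proof.
rewrite /sigma_max cplM_tr_mul; congr Num.sqrt.
rewrite -[RHS]sup1; congr sup; apply/seteqP; split => a /=.
  by rewrite eigenvalue_scalar_mx => /eqP.
by move->; rewrite eigenvalue_scalar_mx.
Qed.

Lemma measurable_vnorm d (T : measurableType d) (f : T -> 'cV[R]_2) :
  (forall i, measurable_fun [set: T] (fun t => f t i ord0)) ->
  measurable_fun [set: T] (fun t => vnorm (f t)).
Proof.
move=> mf; have -> : (fun t => vnorm (f t)) =
    Num.sqrt \o (fun t => f t ord0 ord0 ^+ 2 + f t ord_max ord0 ^+ 2).
  by apply/funext => t; rewrite /vnorm sum_ord2.
apply: (measurableT_comp (continuous_measurable_fun (@sqrt_continuous R))).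
by apply: measurable_funD; apply: measurable_funX.
Qed.

End plane_vectors.

Section cpl_ripple.
Variable R : realType.

Lemma inv_sqr_dist_le (vmin a b e : R) : 0 < vmin -> vmin <= a -> vmin <= b ->
  `|a ^+ 2 - b ^+ 2| <= e * b -> `|a ^-2 - b ^-2| * a <= e / vmin ^+ 2.
Proof.
move=> vmin0 vmin_a vmin_b dist_le.
have a0 : 0 < a := lt_le_trans vmin0 vmin_a.
have b0 : 0 < b := lt_le_trans vmin0 vmin_b.
have e0 : 0 <= e by rewrite -(pmulr_lge0 _ b0); exact: le_trans dist_le.
have ab2_gt0 : 0 < a * b ^+ 2 by rewrite mulr_gt0 ?exprn_gt0.
rewrite -[a in _ * a]ger0_norm ?(ltW a0)// -normrM.
have -> : (a ^-2 - b ^-2) * a = (b ^+ 2 - a ^+ 2) / (a * b ^+ 2).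
  by field; rewrite ?mulf_neq0 ?expf_neq0 ?gt_eqF.
rewrite normrM distrC normfV (gtr0_norm ab2_gt0).
apply: le_trans (_ : e * b / (a * b ^+ 2) <= _).
  by rewrite ler_pM2r ?invr_gt0.
have -> : e * b / (a * b ^+ 2) = e / (a * b).
  by field; rewrite ?mulf_neq0 ?expf_neq0 ?gt_eqF.
rewrite ler_wpM2l// lef_pV2 ?posrE ?mulr_gt0 ?exprn_gt0// expr2.
by apply: ler_pM; rewrite ?(ltW vmin0).
Qed.

Lemma cpl_harE (p q : R) v0 vd t : cpl_har p q v0 vd t =
  (vnorm (v0 + vd t) ^-2 - vnorm v0 ^-2) *: (cplM p q *m (v0 + vd t)).
Proof. by rewrite /cpl_har /cpl_current /cpl_lin scalerBl. Qed.

Lemma vnorm_cpl_har_le (p q vmin rho : R) v0 vd t :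
  0 < vmin -> vmin <= vnorm v0 -> vmin <= vnorm (v0 + vd t) ->
  vnorm (vd t) <= rho * vnorm v0 ->
  vnorm (cpl_har p q v0 vd t) <=
    sigma_max (cplM p q) * (2 + rho) / vmin ^+ 2 * vnorm (vd t).
Proof.
move=> vmin0 vmin_v0 vmin_v vd_le.
rewrite cpl_harE vnormZ vnorm_cplM -sigma_max_cplM.
set s := sigma_max _; set a := vnorm (v0 + _).
set b := vnorm v0; set c := vnorm (vd t).
have s0 : 0 <= s by apply: sqrtr_ge0.
have c0 : 0 <= c := vnorm_ge0 _.
have dist_le : `|a ^+ 2 - b ^+ 2| <= (2 + rho) * c * b.
  apply: le_trans (vnormD_sqr_dist _ _) _; rewrite -/b -/c.
  have : c * c <= c * (rho * b) by rewrite ler_wpM2l.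
  lra.
have := inv_sqr_dist_le vmin0 vmin_v vmin_v0 dist_le.
have -> : `|a ^-2 - b ^-2| * (s * a) = s * (`|a ^-2 - b ^-2| * a) by ring.
have -> : s * (2 + rho) / vmin ^+ 2 * c = s * ((2 + rho) * c / vmin ^+ 2) by ring.
exact: ler_wpM2l.
Qed.

Lemma ripple_factor_ge (rho : R) : 0 <= rho -> 2 * rho + rho ^+ 2 < 1 ->
  2 + rho <= (rho + 1) * (rho + 2) / (1 - (2 * rho + rho ^+ 2)).
Proof. by move=> rho0 small; rewrite ler_pdivlMr; [nra | lra]. Qed.

End cpl_ripple.

Theorem lemma2 (R : realType) (pc qc vmin : R) (v0 : 'cV[R]_2)
  (vd : R -> 'cV[R]_2) (rho : R) :
  0 <= pc -> 0 <= qc -> 0 < vmin ->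
  vmin <= vnorm v0 ->
  (forall t, vmin <= vnorm (v0 + vd t)) ->
  (forall i : 'I_2, measurable_fun [set: R] (fun t => vd t i ord0)) ->
  supnorm vd = (rho * vnorm v0)%:E ->
  2 * rho + rho ^+ 2 < 1 ->
  (L2norm (cpl_har pc qc v0 vd) <=
     (eps_rho pc qc vmin rho)%:E * L2norm vd)%E.
Proof.
move=> _ _ vmin0 vmin_v0 vmin_v mvd sup_vd small.
have vd_le t : vnorm (vd t) <= rho * vnorm v0.
  by rewrite -lee_fin -sup_vd; apply: ereal_sup_ubound; exists t.
have V0_gt0 : 0 < vnorm v0 := lt_le_trans vmin0 vmin_v0.
have rho0 : 0 <= rho.
  by rewrite -(pmulr_lge0 _ V0_gt0); exact: le_trans (vnorm_ge0 _) (vd_le 0).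
have s0 : 0 <= sigma_max (cplM pc qc) := sqrtr_ge0 _.
have vmin2_gt0 : 0 < vmin ^+ 2 := exprn_gt0 _ vmin0.
have gain_le :
    sigma_max (cplM pc qc) * (2 + rho) / vmin ^+ 2 <= eps_rho pc qc vmin rho.
  rewrite /eps_rho mulrAC; apply: ler_wpM2l; last exact: ripple_factor_ge.
  exact: divr_ge0 s0 (ltW vmin2_gt0).
apply: Lnorm_le_scale; first by [].
- apply: le_trans gain_le.
  by apply: divr_ge0; [apply: mulr_ge0 => //; lra | exact: ltW].
- exact: measurable_vnorm.
move=> t; rewrite !ger0_norm ?vnorm_ge0//.
apply: le_trans (vnorm_cpl_har_le pc qc vmin0 vmin_v0 (vmin_v t) (vd_le t)) _.
by rewrite ler_wpM2r ?vnorm_ge0.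
Qed.
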